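(* Let $n$ be a positive integer. Then $Q^{\mathrm{all}} \subseteq Q$, where $Q^{\mathrm{all}} = \{x \in \mathbb{R}^{n\times n} \mid \langle w^G, x\rangle \leqslant \omega(G) \text{ for all graphs } G \text{ with } V(G)\subseteq[n],\ \ x_{ij}\geqslant 0 \text{ for all } i\neq j \in [n]\}$ and $Q = \{x \in \mathbb{R}^{n\times n} \mid \langle 2\,\mathrm{diag}(a) - aa^\intercal, x\rangle \leqslant 1\ \forall a \in \{0,1\}^n\}$.
   Context: $\langle\cdot,\cdot\rangle$ is the Frobenius inner product and $\omega(G)$ the clique number of $G$. For a graph $G$ with $V(G)\subseteq [n]$, the matrix $w^G \in \mathbb{R}^{n\times n}$ is defined by: $w^G_{ii} = 1$ for $i \in V(G)$, $w^G_{ii} = 0$ for $i \in [n]\setminus V(G)$, $w^G_{ij} = w^G_{ji} = -1$ if $i,j \in V(G)$, $i\neq j$ and $ij \notin E(G)$, and $w^G_{ij} = 0$ otherwise. *)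

From HB Require Import structures.
From mathcomp Require Import all_boot all_order all_algebra.
Set Implicit Arguments. Unset Strict Implicit. Unset Printing Implicit Defensive.
Import Order.TTheory GRing.Theory Num.Theory.
Local Open Scope ring_scope.

Record sgraph (n : nat) := SGraph {
  gV : {set 'I_n};
  gadj : rel 'I_n;
  gadj_sym : symmetric gadj;
  gadj_irr : irreflexive gadj;
  gadj_sub : forall i j, gadj i j -> (i \in gV) && (j \in gV)
}.

Definition is_clique n (G : sgraph n) (K : {set 'I_n}) : bool :=
  (K \subset gV G) && [forall i in K, forall j in K, (i != j) ==> gadj G i j].

Definition clique_number n (G : sgraph n) : nat :=
  \max_(K : {set 'I_n} | is_clique G K) #|K|.

Definition wG (R : pzRingType) n (G : sgraph n) : 'M[R]_n :=
  \matrix_(i, j)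
    if i == j then (if i \in gV G then 1 else 0)
    else if [&& i \in gV G, j \in gV G & ~~ gadj G i j] then -1 else 0.

Definition frob (R : pzRingType) n (A B : 'M[R]_n) : R :=
  \sum_(i < n) \sum_(j < n) A i j * B i j.

Definition Q_all (R : realFieldType) n (x : 'M[R]_n) : Prop :=
  (forall G : sgraph n, frob (wG R G) x <= (clique_number G)%:R) /\
  (forall i j : 'I_n, i != j -> 0 <= x i j).

Definition Q_set (R : realFieldType) n (x : 'M[R]_n) : Prop :=
  forall a : 'cV[R]_n, (forall i, a i 0 = 0 \/ a i 0 = 1) ->
    frob (2%:R *: diag_mx a^T - a *m a^T) x <= 1.

(* For a 0/1 vector a with support S, the matrix 2 diag(a) - a a^T is exactly
   w^G of the edgeless graph G on S: the diagonal is 1 on S, and every pair of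
   distinct vertices of S is a non-edge, contributing -1.  An edgeless graph
   has clique number at most 1, so the inequality of Q_all for G is the one
   defining Q. *)
From mathcomp Require Import all_boot all_order all_algebra.
From mathcomp Require Import ring lra.
Import Order.TTheory GRing.Theory Num.Theory.
Local Open Scope ring_scope.

Section EdgelessGraph.
Variables (n : nat) (S : {set 'I_n}).

Definition no_edge : rel 'I_n := fun _ _ => false.

Lemma no_edge_sym : symmetric no_edge. Proof. by []. Qed.
Lemma no_edge_irr : irreflexive no_edge. Proof. by []. Qed.
Lemma no_edge_sub i j : no_edge i j -> (i \in S) && (j \in S). Proof. by []. Qed.

Definition edgeless : sgraph n := SGraph no_edge_sym no_edge_irr no_edge_sub.

Lemma clique_number_edgeless : (clique_number edgeless <= 1)%N.
Proof.
apply/bigmax_leqP => K /andP [_ /forallP cliqueK].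
rewrite leqNgt; apply/negP => /card_gt1P [u [v [uK vK uv]]].
by move: (cliqueK u); rewrite uK => /forallP /(_ v); rewrite vK uv.
Qed.

End EdgelessGraph.

Arguments edgeless {n}.

Lemma wG_edgeless_support (R : realFieldType) n (a : 'cV[R]_n) :
  (forall i, a i 0 = 0 \/ a i 0 = 1) ->
  2%:R *: diag_mx a^T - a *m a^T = wG R (edgeless [set i | a i 0 == 1]).
Proof.
move=> a01; apply/matrixP => i j; rewrite !mxE big_ord1 !mxE /= !inE.
have one_neq0 : (0 == 1 :> R) = false by rewrite eq_sym oner_eq0.
case: (eqVneq i j) => [<-|ij] /=.
  by case: (a01 i) => ->; rewrite ?eqxx ?one_neq0 /=; lra.
rewrite mulr0n mulr0 sub0r.
by case: (a01 i) => ->; case: (a01 j) => ->; rewrite ?eqxx ?one_neq0 /=; lra.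
Qed.

Theorem lemma7 (R : realFieldType) (n : nat) (hn : (0 < n)%N) (x : 'M[R]_n) :
  Q_all x -> Q_set x.
Proof.
move=> [wG_le _] a a01; rewrite wG_edgeless_support //.
apply: le_trans (wG_le _) _.
by rewrite -[1]/(1%:R) ler_nat clique_number_edgeless.
Qed.
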